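(* Let $S_0,S_1,S_2$ be pair-partitions of $[2k]$, and let $\mathbf{p}=(p_1,\dots,p_m)$, $\mathbf{q}=(q_1,\dots,q_m)$ be sequences of positive integers with $q_1\ge\cdots\ge q_m$. Then $$N^{(1)}_{S_0,S_1,S_2}(\mathbf{p}\times\mathbf{q})=\sum_{\varphi:\mathcal{L}(S_0,S_2)\to\mathbb{N}^\star}\ \prod_{\ell\in\mathcal{L}(S_0,S_2)}p_{\varphi(\ell)}\prod_{m'\in\mathcal{L}(S_0,S_1)}q_{\psi(m')},$$ with the convention $p_i=q_i=0$ for $i>m$, where $\psi(m')=\max_\ell\varphi(\ell)$, $\ell$ running over the loops of $\mathcal{L}(S_0,S_2)$ which have an edge with the same label as some edge of $m'$.
   Context: Pair-partitions of $[2k]$ are sets of disjoint two-element subsets with union $[2k]$, identified with fixed-point-free involutions. $\mathcal{L}(A,B)$ is the bipartite graph with a black vertex per pair of $A$, a white vertex per pair of $B$, and an edge labeled $i$ for each $i\in[2k]$ joining the pairs containing $i$; it is viewed as the set of its connected components (loops). $\mathbf{p}\times\mathbf{q}$ is the partition consisting of $q_i$ repeated $p_i$ times for $i=1,\dots,m$. $N^{(1)}_{S_0,S_1,S_2}(\lambda)$ is the number of functions $f$ from $[2k]$ to the boxes of $\lambda$ such that for all $l$: $f(l)=f(S_0(l))$; $f(l)$ and $f(S_1(l))$ are in the same column; $f(l)$ and $f(S_2(l))$ are in the same row. *)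

From mathcomp Require Import all_boot.
Set Implicit Arguments. Unset Strict Implicit. Unset Printing Implicit Defensive.

(* A pair-partition of [n] (here [n] = {0,...,n-1} = 'I_n), identified with a
   fixed-point-free involution. *)
Definition pair_partition (n : nat) (S : 'I_n -> 'I_n) : Prop :=
  forall i, S i != i /\ S (S i) = i.

(* The bipartite graph L(A,B): black vertex per pair of A, white vertex per
   pair of B, edge labelled i joining the A-pair and the B-pair containing i.
   Edges i and A i share a black vertex, edges i and B i share a white vertex;
   a connected component (loop) is identified with its set of edge labels. *)
Definition loop_rel (n : nat) (A B : 'I_n -> 'I_n) : rel 'I_n :=
  fun i j => (j == A i) || (j == B i).

Definition loops (n : nat) (A B : 'I_n -> 'I_n) : {set {set 'I_n}} :=
  [set [set j | connect (loop_rel A B) i j] | i : 'I_n].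

Definition loop_type (n : nat) (A B : 'I_n -> 'I_n) :=
  {l : {set 'I_n} | l \in loops A B}.

(* Rows of a partition given as a sequence of row lengths; a box is (r, c)
   with r < size lam and c < lam_r (row r, column c; 0-indexed). *)
Definition box_type (lam : seq nat) := ('I_(size lam) * 'I_(\max_(x <- lam) x))%type.

Definition is_box (lam : seq nat) (b : box_type lam) : bool :=
  (b.2 < nth 0 lam b.1)%N.

Definition N1 (n : nat) (S0 S1 S2 : 'I_n -> 'I_n) (lam : seq nat) : nat :=
  #|[set f : {ffun 'I_n -> box_type lam} |
      [forall l, [&& is_box (f l),
                     f l == f (S0 l),
                     (f l).2 == (f (S1 l)).2 &
                     (f l).1 == (f (S2 l)).1]]]|.

Definition pq_partition (p q : seq nat) : seq nat :=
  flatten [seq nseq (nth 0 p i) (nth 0 q i) | i <- iota 0 (size p)].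

(* A filling f of the boxes obeying the three constraints is constant on pairs
   of S0, keeps its row along pairs of S2 and its column along pairs of S1; so
   it amounts to a row R(l) for every loop l of L(S0,S2) and a column C(m') for
   every loop m' of L(S0,S1), subject to C(m') < lam_(R(l)) whenever l and m'
   share a label. Rows of p x q come in blocks: p_i rows of length q_i.
   Recording only the block phi(l) of each row R(l) leaves prod_l p_(phi l)
   choices of R, and since q is nonincreasing the admissible columns of m' are
   those below q_(psi m'), psi(m') the largest block met by m'. *)

From mathcomp Require Import all_boot.
Set Implicit Arguments. Unset Strict Implicit. Unset Printing Implicit Defensive.

Lemma pair_partition_involutive n (S : 'I_n -> 'I_n) :
  pair_partition S -> involutive S.
Proof. by move=> PS i; case: (PS i). Qed.

Section Loops.
Variables (n : nat) (A B : 'I_n -> 'I_n).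
Hypotheses (AK : involutive A) (BK : involutive B).

Lemma loop_rel_sym : symmetric (loop_rel A B).
Proof.
move=> i j; rewrite /loop_rel.
by apply/idP/idP; case/orP => /eqP ->; rewrite ?AK ?BK eqxx ?orbT.
Qed.

Lemma connect_loop_rel_sym : connect_sym (loop_rel A B).
Proof. exact: sym_connect_sym loop_rel_sym. Qed.

Lemma loop_of_in_loops (j : 'I_n) :
  [set x | connect (loop_rel A B) j x] \in loops A B.
Proof. by apply/imsetP; exists j. Qed.

Definition loop_of (j : 'I_n) : loop_type A B :=
  exist (fun l => l \in loops A B) _ (loop_of_in_loops j).

Lemma mem_loop_of (l : loop_type A B) j : (j \in val l) = (loop_of j == l).
Proof.
case: l => s s_loop /=; have [i _ def_s] := imsetP s_loop; subst s.
rewrite inE; apply/idP/eqP => [ij | /(congr1 val)/setP/(_ j)].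
  apply: val_inj; apply/setP => x; rewrite !inE.
  by rewrite (same_connect connect_loop_rel_sym ij).
by rewrite /= !inE connect0 => <-.
Qed.

Lemma eq_loop_of j j' : (loop_of j' == loop_of j) = connect (loop_rel A B) j j'.
Proof. by rewrite -mem_loop_of inE. Qed.

Lemma loop_ofA j : loop_of (A j) = loop_of j.
Proof. by apply/eqP; rewrite eq_loop_of connect1 // /loop_rel eqxx. Qed.

Lemma loop_ofB j : loop_of (B j) = loop_of j.
Proof. by apply/eqP; rewrite eq_loop_of connect1 // /loop_rel eqxx orbT. Qed.

Lemma loop_of_surj (l : loop_type A B) : exists j, loop_of j = l.
Proof.
case: l => s s_loop; have [i _ def_s] := imsetP s_loop.
by exists i; apply: val_inj.
Qed.

Lemma loop_invariant_factor (U : Type) (h : 'I_n -> U) :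
  (forall x, h (A x) = h x) -> (forall x, h (B x) = h x) ->
  exists H : loop_type A B -> U, forall j, h j = H (loop_of j).
Proof.
move=> hA hB; have const x y : loop_of x = loop_of y -> h y = h x.
  move/eqP; rewrite eq_loop_of => /connectP [s].
  elim: s y => [|z s IHs] y /= => [_ -> //|/andP [yz zs] x_last].
  by rewrite -(IHs z zs x_last); case/orP: yz => /eqP ->.
have /fin_all_exists [H hH] (l : loop_type A B) :
    exists u, forall j, loop_of j = l -> h j = u.
  by have [x <-] := loop_of_surj l; exists (h x) => j /esym; apply: const.
by exists H => j; apply: hH.
Qed.

End Loops.

Section LoopPairs.
Variables (n : nat) (S0 S1 S2 : 'I_n -> 'I_n).
Hypotheses (S0K : involutive S0) (S1K : involutive S1) (S2K : involutive S2).

Local Notation col_loop := (loop_of S0 S1).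
Local Notation row_loop := (loop_of S0 S2).

Lemma N1_loop_labellings (lam : seq nat) :
  N1 S0 S1 S2 lam =
  \sum_(R : {ffun loop_type S0 S2 -> 'I_(size lam)})
   \sum_(C : {ffun loop_type S0 S1 -> 'I_(\max_(x <- lam) x)})
     [forall j, C (col_loop j) < nth 0 lam (R (row_loop j))].
Proof.
pose labellings := ({ffun loop_type S0 S2 -> 'I_(size lam)} *
                   {ffun loop_type S0 S1 -> 'I_(\max_(x <- lam) x)})%type.
pose filling (RC : labellings) : {ffun 'I_n -> box_type lam} :=
  [ffun j => (RC.1 (row_loop j), RC.2 (col_loop j))].
pose admissible := [pred RC : labellings |
  [forall j, RC.2 (col_loop j) < nth 0 lam (RC.1 (row_loop j))]].
have filling_inj : injective filling.
  move=> [R C] [R' C'] /ffunP eqRC.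
  by congr (_, _); apply/ffunP => l; have [j <-] := loop_of_surj l;
     have := eqRC j; rewrite !ffunE => -[].
rewrite /N1; have -> : [set f : {ffun 'I_n -> box_type lam} |
      [forall l, [&& is_box (f l), f l == f (S0 l),
                     (f l).2 == (f (S1 l)).2 & (f l).1 == (f (S2 l)).1]]]
    = filling @: [set RC | admissible RC].
  apply/setP => f; rewrite inE; apply/forallP/imsetP => [f_ok | [[R C]]].
    have [R R_f] : exists R, forall j, (f j).1 = R (row_loop j).
      apply: loop_invariant_factor => x;
        by case/and4P: (f_ok x) => _ /eqP-> _ /eqP.
    have [C C_f] : exists C, forall j, (f j).2 = C (col_loop j).
      apply: loop_invariant_factor => x;
        by case/and4P: (f_ok x) => _ /eqP-> /eqP.
    exists ([ffun l => R l], [ffun m => C m]).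
      rewrite inE; apply/forallP => j; rewrite !ffunE -R_f -C_f.
      by case/and4P: (f_ok j).
    by rewrite /filling; apply/ffunP => j; rewrite !ffunE -R_f -C_f; case: (f j).
  rewrite inE => /forallP RC_ok -> j; rewrite /filling !ffunE /=.
  by rewrite !loop_ofA // !loop_ofB // !eqxx /is_box /= RC_ok.
rewrite card_imset // pair_big /= -sum1_card big_mkcond /=.
by apply: eq_bigr => RC _; rewrite inE; case: ifP.
Qed.

Lemma bigmax_meeting_loops (m : loop_type S0 S1) (F : loop_type S0 S2 -> nat) :
  \max_(l : loop_type S0 S2 | [exists j, (j \in val m) && (j \in val l)]) F l =
  \max_(j | col_loop j == m) F (row_loop j).
Proof.
apply/eqP; rewrite eqn_leq; apply/andP; split; apply/bigmax_leqP.
  move=> l /existsP [j]; rewrite !mem_loop_of // => /andP [jm /eqP <-].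
  exact: leq_bigmax_cond.
move=> j jm; apply: leq_bigmax_cond; apply/existsP; exists j.
by rewrite !mem_loop_of // jm eqxx.
Qed.

End LoopPairs.

Lemma sum_ffun_forall (I J K : finType) (h : J -> I) (P : J -> K -> bool) :
  \sum_(C : {ffun I -> K}) [forall j, P j (C (h j))] =
  \prod_(i : I) \sum_(c : K) [forall j, (h j == i) ==> P j c].
Proof.
rewrite bigA_distr_bigA; apply: eq_bigr => C _.
case: forallP => [C_ok | C_nok].
  by rewrite big1 // => i _; apply/eqP; rewrite eqb1;
     apply/forallP => j; apply/implyP => /eqP <-.
have /forallPn [j /negPf Pj] : ~~ [forall j, P j (C (h j))] by apply/forallP.
rewrite (bigD1 (h j)) //=; apply/esym/eqP; rewrite muln_eq0; apply/orP; left.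
by rewrite eqb0; apply/forallPn; exists j; rewrite eqxx Pj.
Qed.

Lemma sum_ffun_comp (L J K : finType) (g : J -> K) (F : {ffun L -> K} -> nat) :
  \sum_(R : {ffun L -> J}) F [ffun l => g (R l)] =
  \sum_(phi : {ffun L -> K}) (\prod_(l : L) #|[pred j | g j == phi l]|) * F phi.
Proof.
rewrite (partition_big (fun R : {ffun L -> J} => [ffun l => g (R l)]) xpredT) //.
apply: eq_bigr => phi _; rewrite (eq_bigr (fun=> F phi)) => [|R /eqP <- //].
rewrite (eq_bigl [in family (fun l => [pred j | g j == phi l])]) => [|R].
  by rewrite sum_nat_const card_family foldrE big_map big_enum.
rewrite andTb; apply/eqP/familyP => [<- l | gR]; first by rewrite ffunE inE.
by apply/ffunP => l; rewrite ffunE; apply/eqP; have := gR l; rewrite inE.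
Qed.

Lemma sum_ord_ltn (M t : nat) : t <= M -> \sum_(c < M) (c < t) = t.
Proof.
move=> tM; rewrite -(big_mkord xpredT (fun c => (c < t) : nat)).
rewrite (@big_cat_nat _ _ _ t 0 M _ _ (leq0n t) tM) /=.
rewrite (eq_big_nat _ _ (F2 := fun=> 1)) => [|i /andP [_ ->] //].
rewrite (eq_big_nat _ _ (F2 := fun=> 0) (m := t)) => [|i /andP [ti _]]; last first.
  by rewrite ltnNge ti.
by rewrite !sum_nat_const_nat muln0 muln1 subn0 addn0.
Qed.

Lemma sum_ord_forall_ltn_nth (J : finType) (P : pred J) (w : J -> nat)
    (q : seq nat) (M : nat) :
  (forall i j, i <= j < size q -> nth 0 q j <= nth 0 q i) ->
  (exists j, P j) -> (forall j, P j -> w j < size q) ->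
  (forall j, P j -> nth 0 q (w j) <= M) ->
  \sum_(c < M) [forall j, P j ==> (c < nth 0 q (w j))] =
  nth 0 q (\max_(j | P j) w j).
Proof.
move=> q_noninc [j0 Pj0] w_lt q_le.
have P_ne : 0 < #|P| by apply/card_gt0P; exists j0.
have [jm Pjm max_w] := eq_bigmax_cond w P_ne; have {}Pjm : P jm by [].
rewrite max_w -(sum_ord_ltn (q_le _ Pjm)); apply: eq_bigr => c _.
congr nat_of_bool; apply/forallP/idP => [/(_ jm) | lt_c j].
  by rewrite Pjm.
apply/implyP => Pj; apply: leq_trans lt_c (q_noninc _ _ _).
by rewrite w_lt // andbT -max_w; apply: leq_bigmax_cond.
Qed.

(* The row r of p x q lies in block [nth 0 (pq_blocks p) r]. *)
Definition pq_blocks (p : seq nat) : seq nat :=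
  flatten [seq nseq (nth 0 p i) i | i <- iota 0 (size p)].

Lemma pq_partitionE (p q : seq nat) :
  pq_partition p q = map (nth 0 q) (pq_blocks p).
Proof.
rewrite /pq_partition /pq_blocks map_flatten -map_comp; congr flatten.
by apply: eq_map => i /=; rewrite map_nseq.
Qed.

Lemma pq_blocks_lt (p : seq nat) x : x \in pq_blocks p -> x < size p.
Proof.
case/flattenP => s /mapP [i]; rewrite mem_iota add0n => /andP [_ ip] ->.
by rewrite mem_nseq => /andP [_ /eqP ->].
Qed.

Lemma count_pq_blocks (p : seq nat) i :
  i < size p -> count_mem i (pq_blocks p) = nth 0 p i.
Proof.
move=> ip; rewrite /pq_blocks count_flatten -map_comp sumnE big_map.
rewrite (bigD1_seq i) ?mem_iota ?iota_uniq //= count_nseq /= eqxx mul1n.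
rewrite big1_seq ?addn0 // => j /andP [ji _] /=.
by rewrite count_nseq /= (negPf ji).
Qed.

Section Blocks.
Variables p q : seq nat.
Local Notation lam := (pq_partition p q).

Lemma size_pq_partition : size lam = size (pq_blocks p).
Proof. by rewrite pq_partitionE size_map. Qed.

Lemma pq_block_proof (r : 'I_(size lam)) : nth 0 (pq_blocks p) r < size p.
Proof. by apply/pq_blocks_lt/mem_nth; rewrite -size_pq_partition. Qed.

Definition pq_block (r : 'I_(size lam)) : 'I_(size p) := Ordinal (pq_block_proof r).

Lemma nth_pq_partition (r : 'I_(size lam)) :
  nth 0 lam r = nth 0 q (pq_block r).
Proof. by rewrite /= {1}pq_partitionE (nth_map 0) -?size_pq_partition. Qed.

Lemma card_pq_block (i : 'I_(size p)) :
  #|[pred r | pq_block r == i]| = nth 0 p i.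
Proof.
rewrite -count_pq_blocks // -sum1_count (big_nth 0) -size_pq_partition big_mkord.
by rewrite -sum1_card; apply: eq_bigl => r; rewrite inE -val_eqE.
Qed.

Lemma nth_le_max_pq_partition i :
  i < size p -> 0 < nth 0 p i -> nth 0 q i <= \max_(x <- lam) x.
Proof.
move=> ip p_pos; apply: (@leq_bigmax_seq _ _ xpredT id) => //.
rewrite pq_partitionE; apply: map_f.
by rewrite -has_pred1 has_count count_pq_blocks.
Qed.

End Blocks.

Theorem lemma3p9 (k : nat) (S0 S1 S2 : 'I_(2 * k) -> 'I_(2 * k))
  (p q : seq nat) :
  pair_partition S0 -> pair_partition S1 -> pair_partition S2 ->
  size p = size q ->
  (forall i, (i < size p)%N -> (0 < nth 0 p i)%N /\ (0 < nth 0 q i)%N) ->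
  (forall i j, (i <= j < size q)%N -> (nth 0 q j <= nth 0 q i)%N) ->
  N1 S0 S1 S2 (pq_partition p q) =
  \sum_(phi : {ffun loop_type S0 S2 -> 'I_(size p)})
     (\prod_(l : loop_type S0 S2) nth 0 p (phi l)) *
     (\prod_(m' : loop_type S0 S1)
        nth 0 q (\max_(l : loop_type S0 S2 |
                         [exists j, (j \in val m') && (j \in val l)]) (phi l : nat))).
Proof.
move=> /pair_partition_involutive S0K /pair_partition_involutive S1K.
move=> /pair_partition_involutive S2K size_pq pq_pos q_noninc.
set M := \max_(x <- pq_partition p q) x.
pose columns (phi : {ffun loop_type S0 S2 -> 'I_(size p)}) :=
  \sum_(C : {ffun loop_type S0 S1 -> 'I_M})
    [forall j, C (loop_of S0 S1 j) < nth 0 q (phi (loop_of S0 S2 j))].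
rewrite N1_loop_labellings //.
transitivity (\sum_(R : {ffun loop_type S0 S2 -> 'I_(size (pq_partition p q))})
                columns [ffun l => pq_block (R l)]).
  apply: eq_bigr => R _; apply: eq_bigr => C _; congr nat_of_bool.
  by apply: eq_forallb => j; rewrite ffunE nth_pq_partition.
rewrite sum_ffun_comp; apply: eq_bigr => phi _; congr (_ * _).
  by apply: eq_bigr => l _; rewrite card_pq_block.
rewrite /columns (sum_ffun_forall (loop_of S0 S1)
  (fun j (c : 'I_M) => c < nth 0 q (phi (loop_of S0 S2 j)))).
apply: eq_bigr => m _; rewrite bigmax_meeting_loops // (sum_ord_forall_ltn_nth
  (P := fun j => loop_of S0 S1 j == m) (w := fun j => phi (loop_of S0 S2 j))) //.
- by have [j <-] := loop_of_surj m; exists j.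
- by move=> j _; rewrite -size_pq.
move=> j _; have [p_pos _] := pq_pos _ (ltn_ord (phi (loop_of S0 S2 j))).
exact: nth_le_max_pq_partition.
Qed.
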